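(* Let $IS\in\{\Box,\blacksquare\}^2$ and let $\tau$ be a correct compositional translation from $\mathrm{SYNCSIMPLE}$ into $\mathrm{LOCKSIMPLE}_{2,IS}$ of blocking type $(P_1,P_2)$. Then $IS=(\blacksquare,\blacksquare)$, $\tau(!)$ has a prefix in $\{P_2,T_2\}^*P_1$, and $\tau(?)$ has a prefix in $\{P_1,T_1\}^*P_2$.
   Context: $\mathrm{SYNCSIMPLE}$: subprocesses $\mathcal{U} ::= \checkmark \mid 0 \mid\, !\mathcal{U} \mid\, ?\mathcal{U}$; processes are finite parallel compositions ($\mid$ associative, commutative, $0$ a unit). Reduction: $!\mathcal{U}_1\mid ?\mathcal{U}_2\mid \mathcal{P}\to \mathcal{U}_1\mid\mathcal{U}_2\mid\mathcal{P}$. Successful: of form $\checkmark\mid\mathcal{P}$; may-convergent: reduces to a successful process; must-convergent: every reachable process is may-convergent. $\mathrm{LOCKSIMPLE}_{k,IS}$ ($IS\in\{\Box,\blacksquare\}^k$, $\Box$ empty, $\blacksquare$ full): subprocesses are words over $\{P_1,T_1,\dots,P_k,T_k\}$ followed by $0$ or $\checkmark$; states $(\mathcal{P},C)$ reduce by $(P_i\mathcal{U}\mid\mathcal{P},C)\to(\mathcal{U}\mid\mathcal{P},C[C_i:=\blacksquare])$ only if $C_i=\Box$, and $(T_i\mathcal{U}\mid\mathcal{P},C)\to(\mathcal{U}\mid\mathcal{P},C[C_i:=\Box])$ always. Success = process contains $\checkmark$; a process $\mathcal{P}$ is may/must-convergent iff the state $(\mathcal{P},IS)$ is. A compositional translation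 $\tau$ is given by words $\tau(!),\tau(?)$ with $\tau(0)=0$, $\tau(\checkmark)=\checkmark$, $\tau(!\mathcal{U})=\tau(!)\tau(\mathcal{U})$, $\tau(?\mathcal{U})=\tau(?)\tau(\mathcal{U})$, $\tau$ commuting with $\mid$; correct = preserves and reflects may- and must-convergence. Blocking type of a word $S$: execute $S$ alone from $IS$; if it gets stuck at an occurrence of $P_i$ that is the first symbol from $\{P_i,T_i\}$ in $S$ the type is $P_i$, if stuck at a later occurrence of $P_i$ the type is $P_iP_i$; $\tau$ has blocking type $(W_1,W_2)$ if $\tau(!)$ has type $W_1$ and $\tau(?)$ type $W_2$. $X^*$ denotes finite words over a symbol set $X$. *)

From mathcomp Require Import all_boot.
Set Implicit Arguments. Unset Strict Implicit. Unset Printing Implicit Defensive.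

(* A subprocess  a_1 a_2 ... a_n e  with a_j in {!,?} and e in {0, ✓} is
   represented as (actions, terminal) : seq bool * bool where
   true = '!' , false = '?' for actions, and terminal true = ✓, false = 0. *)
Definition ssub := (seq bool * bool)%type.
(* processes: finite parallel compositions, i.e. multisets (seq up to perm) *)
Definition sproc := seq ssub.

Definition sstep (P Q : sproc) : Prop :=
  exists (u1 u2 : seq bool) (e1 e2 : bool) (R : sproc),
    perm_eq P ((true :: u1, e1) :: (false :: u2, e2) :: R) /\
    Q = (u1, e1) :: (u2, e2) :: R.

Inductive sreach : sproc -> sproc -> Prop :=
| sreach_refl P : sreach P P
| sreach_step P Q R : sstep P Q -> sreach Q R -> sreach P R.

Definition ssucc (P : sproc) : bool := ([::], true) \in P.
Definition smay (P : sproc) : Prop := exists Q, sreach P Q /\ ssucc Q.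
Definition smust (P : sproc) : Prop := forall Q, sreach P Q -> smay Q.

(* symbols P_i / T_i for i : 'I_k, encoded as (true, i) / (false, i) *)
Definition lsym (k : nat) := (bool * 'I_k)%type.
Definition Pl {k} (i : 'I_k) : lsym k := (true, i).
Definition Tl {k} (i : 'I_k) : lsym k := (false, i).
(* subprocess: a word followed by 0 (false) or ✓ (true) *)
Definition lsub (k : nat) := (seq (lsym k) * bool)%type.
Definition lproc (k : nat) := seq (lsub k).
(* lock configuration: C i = true means full (■), false means empty (□) *)
Definition lconf (k : nat) := {ffun 'I_k -> bool}.

Definition setc {k} (C : lconf k) (i : 'I_k) (b : bool) : lconf k :=
  [ffun j => if j == i then b else C j].

Definition lstep {k} (S S' : lproc k * lconf k) : Prop :=
  exists (i : 'I_k) (w : seq (lsym k)) (e : bool) (R : lproc k),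
    (perm_eq S.1 ((Pl i :: w, e) :: R) /\ S.2 i = false /\
     S' = ((w, e) :: R, setc S.2 i true))
    \/
    (perm_eq S.1 ((Tl i :: w, e) :: R) /\
     S' = ((w, e) :: R, setc S.2 i false)).

Inductive lreach {k} : lproc k * lconf k -> lproc k * lconf k -> Prop :=
| lreach_refl S : lreach S S
| lreach_step S S' S'' : lstep S S' -> lreach S' S'' -> lreach S S''.

Definition lsucc {k} (S : lproc k * lconf k) : bool := ([::], true) \in S.1.
Definition lmay {k} (S : lproc k * lconf k) : Prop :=
  exists S', lreach S S' /\ lsucc S'.
Definition lmust {k} (S : lproc k * lconf k) : Prop :=
  forall S', lreach S S' -> lmay S'.

(* compositional translation given by the words tau(!) = ts and tau(?) = tr *)
Definition tr_sub {k} (ts tr : seq (lsym k)) (u : ssub) : lsub k :=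
  (flatten (map (fun a : bool => if a then ts else tr) u.1), u.2).
Definition tr_proc {k} (ts tr : seq (lsym k)) (P : sproc) : lproc k :=
  map (tr_sub ts tr) P.

Definition correct_tr {k} (IS : lconf k) (ts tr : seq (lsym k)) : Prop :=
  forall P : sproc,
    (smay P <-> lmay (tr_proc ts tr P, IS)) /\
    (smust P <-> lmust (tr_proc ts tr P, IS)).

Inductive btype (k : nat) := BT_P of 'I_k | BT_PP of 'I_k.
Arguments BT_P {k}. Arguments BT_PP {k}.

(* execute the word w alone from configuration C; [pre] is the part of the
   word already executed.  Returns the blocking type, or None if the word
   never gets stuck. *)
Fixpoint btype_run {k} (C : lconf k) (pre w : seq (lsym k)) : option (btype k) :=
  match w with
  | [::] => None
  | s :: w' =>
      if s.1 then
        if C s.2 then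
          Some (if has (fun t : lsym k => t.2 == s.2) pre then BT_PP s.2 else BT_P s.2)
        else btype_run (setc C s.2 true) (rcons pre s) w'
      else btype_run (setc C s.2 false) (rcons pre s) w'
  end.

Definition blocking_type {k} (IS : lconf k) (w : seq (lsym k)) : option (btype k) :=
  btype_run IS [::] w.

From mathcomp Require Import all_boot.

(* A word whose blocking type is [P_i] meets no [P_i]/[T_i] before getting
   stuck at its first [P_i]; so lock [i] is still in its initial state there,
   and being stuck means it was initially full.  With two locks, a prefix free
   of index [i] is a word over the other index. *)

Lemma btype_run_P k (C : lconf k) (pre w : seq (lsym k)) (i : 'I_k) :
  btype_run C pre w = Some (BT_P i) ->
  exists w1 r, [/\ w = w1 ++ Pl i :: r, all (fun t : lsym k => t.2 != i) (pre ++ w1)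
                 & C i].
Proof.
elim: w C pre => [|[b j] w IH] C pre //=.
have run_tail c : btype_run (setc C j c) (rcons pre (b, j)) w = Some (BT_P i) ->
    exists w1 r, [/\ (b, j) :: w = w1 ++ Pl i :: r,
                     all (fun t : lsym k => t.2 != i) (pre ++ w1) & C i].
  move=> /IH [w1 [r [-> pre_free Ci]]].
  exists ((b, j) :: w1), r; split=> //; first by rewrite -cat_rcons.
  have ji : j != i by move: pre_free; rewrite all_cat all_rcons => /andP[/andP[]].
  by move: Ci; rewrite /setc ffunE eq_sym (negbTE ji).
case: b run_tail => run_tail; last exact: run_tail.
case Cj: (C j); last exact: run_tail.
case: ifP => // touched [<-].
by exists [::], w; rewrite cats0 all_predC touched Cj.
Qed.

Lemma blocking_type_P k (IS : lconf k) (w : seq (lsym k)) (i : 'I_k) :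
  blocking_type IS w = Some (BT_P i) ->
  IS i /\ exists w1 r, w = w1 ++ Pl i :: r /\ all (fun t : lsym k => t.2 != i) w1.
Proof. by move=> /btype_run_P [w1 [r [-> free ISi]]]; split=> //; exists w1, r. Qed.

Lemma ord2_neq (i j t : 'I_2) : i != j -> (t != i) = (t == j).
Proof. by case: i j t => [[|[|//]] ?] [[|[|//]] ?] [[|[|//]] ?]. Qed.

Lemma ffun_ord2_true (f : {ffun 'I_2 -> bool}) :
  f ord0 -> f ord_max -> f = [ffun => true].
Proof.
move=> f0 f1; apply/ffunP => -[[|[|//]] lt_i2]; rewrite ffunE.
- by rewrite -f0; congr (f _); apply: val_inj.
- by rewrite -f1; congr (f _); apply: val_inj.
Qed.

(* P_1 = Pl ord0 (index 0), P_2 = Pl ord_max (index 1); likewise for T. *)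
Theorem lemma5p12 (IS : {ffun 'I_2 -> bool}) (ts tr : seq (lsym 2)) :
  correct_tr IS ts tr ->
  blocking_type IS ts = Some (BT_P (ord0 : 'I_2)) ->
  blocking_type IS tr = Some (BT_P (ord_max : 'I_2)) ->
  [/\ IS = [ffun => true],
      (exists w r, ts = w ++ Pl (ord0 : 'I_2) :: r /\
         all (fun s : lsym 2 => s.2 == (ord_max : 'I_2)) w)
    & (exists w r, tr = w ++ Pl (ord_max : 'I_2) :: r /\
         all (fun s : lsym 2 => s.2 == (ord0 : 'I_2)) w)].
Proof.
move=> _ /blocking_type_P [IS0 [w1 [r1 [-> free1]]]].
move=> /blocking_type_P [IS1 [w2 [r2 [-> free2]]]].
split; first exact: ffun_ord2_true.
- exists w1, r1; split=> //; apply: sub_all free1 => t.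
  by rewrite (@ord2_neq _ ord_max).
- exists w2, r2; split=> //; apply: sub_all free2 => t.
  by rewrite (@ord2_neq _ ord0).
Qed.
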